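(* Let $R=X^\dagger X\in\mathcal C_{K_0}$ with $X=\bigoplus_k(I_{\mathcal H_k}\otimes X_k)\in\mathcal A'_G$ such that exactly one $X_k$ is nonzero and it has rank one. Then $R$ is extremal in $\mathcal C_{K_0}$.
   Context: Let $\mathcal H,\mathcal K$ be finite-dimensional Hilbert spaces and $g\mapsto U_g$, $g\mapsto V_g$ unitary representations of a group $G$ on $\mathcal H$ and $\mathcal K$; $U_g^*$ is the complex conjugate in a fixed basis. Decompose $\mathcal K\otimes\mathcal H=\bigoplus_k(\mathcal H_k\otimes\mathbb C^{m_k})$ according to the equivalence classes $k$ of irreducible components of $V_g\otimes U_g^*$ (irreducible space $\mathcal H_k$, multiplicity $m_k$). The commutant $\mathcal A'_G$ consists of operators $\bigoplus_k(I_{\mathcal H_k}\otimes M_k)$. Fix $0\le K_0\le I_{\mathcal H}$ and let $\mathcal C_{K_0}=\{R\in\mathcal A'_G: R\ge0,\ \operatorname{Tr}_{\mathcal K}[R]=K_0\}$. *)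

From HB Require Import structures.
From mathcomp Require Import all_boot all_order all_algebra.
From mathcomp Require monoid.
From mathcomp Require Import mxtens.

(* General (possibly infinite) groups, from mathcomp boot/monoid.v. *)
Notation mgroupType := monoid.Group.Exports.groupType.

Set Implicit Arguments.
Unset Strict Implicit.
Unset Printing Implicit Defensive.

Import Order.TTheory GRing.Theory Num.Theory.
Local Open Scope ring_scope.
Local Open Scope sesquilinear_scope.

(* Convention: operators are square matrices acting on COLUMN vectors;
   A ^t* is the adjoint (conjugate transpose); A *t B is the Kronecker
   product, with index (a, i) of K (x) H encoded as mxtens_index (a, i). *)

Definition psdmx {C : numClosedFieldType} {n : nat} (A : 'M[C]_n) : Prop :=
  A ^t* = A /\ forall v : 'cV[C]_n, 0 <= (v ^t* *m A *m v) 0 0.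

Definition conjmxC {C : numClosedFieldType} {m n : nat} (A : 'M[C]_(m, n)) :=
  map_mx (fun x : C => x^*) A.

Definition unitary_rep {C : numClosedFieldType} {G : mgroupType} {n : nat}
  (U : G -> 'M[C]_n) : Prop :=
  [/\ U (monoid.one : G) = 1%:M,
      forall g h : G, U (monoid.mul g h) = U g *m U h
    & forall g, U g \is unitarymx].

(* Irreducible unitary representation: nonzero dimension and no invariant
   subspace (column space of S) other than 0 and the whole space. *)
Definition irred_rep {C : numClosedFieldType} {G : mgroupType} {n : nat}
  (rho : G -> 'M[C]_n) : Prop :=
  [/\ unitary_rep rho, (0 < n)%N &
      forall S : 'M[C]_n,
        (forall g, ((rho g *m S)^T <= S^T)%MS) -> S = 0 \/ row_full S^T].

Definition equiv_rep {C : numClosedFieldType} {G : mgroupType} {n1 n2 : nat}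
  (rho1 : G -> 'M[C]_n1) (rho2 : G -> 'M[C]_n2) : Prop :=
  exists T : 'M[C]_(n1, n2),
    [/\ row_free T, row_full T & forall g, rho1 g *m T = T *m rho2 g].

(* The decomposition  K (x) H = (+)_k (H_k (x) C^{m_k})  of V_g (x) U_g^*,
   implemented by a unitary W : K (x) H -> (+)_k (C^{d_k} (x) C^{m_k}),
   where rho k is an irreducible representation on H_k = C^{d k}, the rho k
   are pairwise inequivalent, and m k >= 1 is the multiplicity. *)
Definition isotypic_decomposition {C : numClosedFieldType} {G : mgroupType}
  {dK dH r : nat} {d m : 'I_r -> nat}
  (V : G -> 'M[C]_dK) (U : G -> 'M[C]_dH)
  (rho : forall k : 'I_r, G -> 'M[C]_(d k))
  (W : 'M[C]_(\sum_(k < r) (d k * m k), dK * dH)) : Prop :=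
  [/\ W \is unitarymx /\ W ^t* \is unitarymx,
      forall k, irred_rep (rho k),
      forall k l, k != l -> ~ equiv_rep (rho k) (rho l),
      forall k, (0 < m k)%N &
      forall g, W *m (V g *t conjmxC (U g)) *m W ^t* =
                \mxdiag_(k < r) (rho k g *t (1%:M : 'M[C]_(m k)))].

(* The operator (+)_k (I_{H_k} (x) M_k), written in the original basis of K (x) H. *)
Definition blockop {C : numClosedFieldType} {dK dH r : nat} {d m : 'I_r -> nat}
  (W : 'M[C]_(\sum_(k < r) (d k * m k), dK * dH))
  (M : forall k : 'I_r, 'M[C]_(m k)) : 'M[C]_(dK * dH) :=
  W ^t* *m \mxdiag_(k < r) ((1%:M : 'M[C]_(d k)) *t M k) *m W.

Definition commutantG {C : numClosedFieldType} {dK dH r : nat} {d m : 'I_r -> nat}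
  (W : 'M[C]_(\sum_(k < r) (d k * m k), dK * dH)) (R : 'M[C]_(dK * dH)) : Prop :=
  exists M : forall k : 'I_r, 'M[C]_(m k), R = blockop W M.

Definition ptraceK {C : numClosedFieldType} {dK dH : nat}
  (R : 'M[C]_(dK * dH)) : 'M[C]_dH :=
  \matrix_(i, j) \sum_(a < dK) R (mxtens_index (a, i)) (mxtens_index (a, j)).

Definition CK0 {C : numClosedFieldType} {dK dH r : nat} {d m : 'I_r -> nat}
  (W : 'M[C]_(\sum_(k < r) (d k * m k), dK * dH)) (K0 : 'M[C]_dH)
  (R : 'M[C]_(dK * dH)) : Prop :=
  [/\ commutantG W R, psdmx R & ptraceK R = K0].

Definition extremal {C : numClosedFieldType} {n : nat}
  (S : 'M[C]_n -> Prop) (R : 'M[C]_n) : Prop :=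
  S R /\
  forall (R1 R2 : 'M[C]_n) (t : C), S R1 -> S R2 -> 0 < t < 1 ->
    R = t *: R1 + (1 - t) *: R2 -> R1 = R /\ R2 = R.

From HB Require Import structures.
From mathcomp Require Import all_boot all_order all_algebra.
From mathcomp Require monoid.
From mathcomp Require Import mxtens.
From mathcomp Require Import ring.
Import Order.TTheory GRing.Theory Num.Theory.
Local Open Scope ring_scope.
Local Open Scope sesquilinear_scope.
Set Implicit Arguments.
Unset Strict Implicit.
Unset Printing Implicit Defensive.

(* Conjugated by the unitary [W], an element [blockop W M] of the commutant is
   the block diagonal matrix of the [1 *t M k]; hence it is positive
   semidefinite only if every [M k] is, and convex combinations act blockwise.
   The only nonzero block of [R = X^* X] is [X_k0^* X_k0], of rank one.  A psd
   matrix [M1] with [t M1 <= P] vanishes on the kernel of [P], so when [P] has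
   rank one it is a multiple of [P].  Thus [R = t R1 + (1 - t) R2] in [C_K0]
   forces [R1 = c R], and [Tr_K R1 = Tr_K R], which is nonzero because [R] is a
   nonzero psd matrix, forces [c = 1]. *)

Local Notation qform A z := (((z)^t* *m A *m z) 0 0).

Section Adjoint.
Variable C : numClosedFieldType.

Lemma adjmxM m n p (A : 'M[C]_(m, n)) (B : 'M[C]_(n, p)) :
  (A *m B)^t* = B^t* *m A^t*.
Proof. by rewrite trmx_mul map_mxM. Qed.

Lemma adjmxD m n (A B : 'M[C]_(m, n)) : (A + B)^t* = A^t* + B^t*.
Proof. by apply/matrixP => i j; rewrite !mxE rmorphD. Qed.

Lemma adjmxZ m n (a : C) (A : 'M[C]_(m, n)) : (a *: A)^t* = a^* *: A^t*.
Proof. by apply/matrixP => i j; rewrite !mxE rmorphM. Qed.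

Lemma adjmx1 n : (1%:M : 'M[C]_n)^t* = 1%:M.
Proof. by apply/matrixP => i j; rewrite !mxE conjC_nat eq_sym. Qed.

Lemma adjmx_delta m n (i : 'I_m) (j : 'I_n) :
  (delta_mx i j : 'M[C]_(m, n))^t* = delta_mx j i.
Proof. by apply/matrixP => a b; rewrite !mxE conjC_nat andbC. Qed.

Lemma adjmx_tens m n p q (A : 'M[C]_(m, n)) (B : 'M[C]_(p, q)) :
  (A *t B)^t* = A^t* *t B^t*.
Proof. by rewrite trmx_tens map_mxT. Qed.

Lemma qform_adjmx n (A : 'M[C]_n) (u v : 'cV[C]_n) :
  ((u^t* *m A *m v) 0 0)^* = (v^t* *m A^t* *m u) 0 0.
Proof.
by rewrite -[in RHS](trmxCK u) -!adjmxM mulmxA [in RHS]mxE [in RHS]mxE.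
Qed.

Lemma qform_addZ n (A : 'M[C]_n) (z y : 'cV[C]_n) s :
  qform A (z + s *: y) = qform A z + s * (z^t* *m A *m y) 0 0
                         + s^* * (y^t* *m A *m z) 0 0 + s^* * s * qform A y.
Proof.
rewrite adjmxD adjmxZ !mulmxDl !mulmxDr -!scalemxAr -!scalemxAl !mxE.
ring.
Qed.

Lemma qform_comb n (A B : 'M[C]_n) (z : 'cV[C]_n) t s :
  qform (t *: A + s *: B) z = t * qform A z + s * qform B z.
Proof. by rewrite mulmxDr mulmxDl -!scalemxAr -!scalemxAl !mxE. Qed.

Lemma qform_delta n (A : 'M[C]_n) i j :
  ((delta_mx i 0 : 'cV[C]_n)^t* *m A *m (delta_mx j 0 : 'cV[C]_n)) 0 0 = A i j.
Proof. by rewrite adjmx_delta -rowE -colE !mxE. Qed.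

Lemma matrix_eq0_cV m n (A : 'M[C]_(m, n)) :
  (forall z : 'cV[C]_n, A *m z = 0) -> A = 0.
Proof.
move=> Az0; apply/matrixP => i j; have := Az0 (delta_mx j 0).
by rewrite -colE => /matrixP/(_ i 0); rewrite !mxE.
Qed.

Lemma adjmx_mul_eq0 m n (X : 'M[C]_(m, n)) : X^t* *m X = 0 -> X = 0.
Proof.
move=> /matrixP XX0; apply/matrixP => i j; rewrite mxE.
have : \sum_k (X k j)^* * X k j = 0.
  by have := XX0 j j; rewrite !mxE; under eq_bigr do rewrite !mxE.
move=> /psumr_eq0P XXjj.
apply/eqP; rewrite -mul_conjC_eq0 mulrC XXjj // => k _.
by rewrite mulrC mul_conjC_ge0.
Qed.

End Adjoint.

Section PositiveSemidefinite.
Variable C : numClosedFieldType.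

Lemma psdmx_conj n p (A : 'M[C]_n) (B : 'M[C]_(n, p)) :
  psdmx A -> psdmx (B^t* *m A *m B).
Proof.
move=> [Ah Apos]; split; first by rewrite !adjmxM trmxCK Ah mulmxA.
by move=> v; have := Apos (B *m v); rewrite adjmxM !mulmxA.
Qed.

Lemma psdmx_diag_ge0 n (A : 'M[C]_n) i : psdmx A -> 0 <= A i i.
Proof. by move=> [_ Apos]; rewrite -qform_delta. Qed.

(* With [a = y^* A z] and [x = (y^* A y + 1)^-1], the form at [z - x a y] is
   [- |a|^2 x^2 (y^* A y + 2)], which forces [a = 0]. *)
Lemma psdmx_qform_eq0 n (A : 'M[C]_n) (z : 'cV[C]_n) :
  psdmx A -> qform A z = 0 -> A *m z = 0.
Proof.
move=> [Ah Apos] Az0; apply/matrixP => i j; rewrite (ord1 j) [RHS]mxE.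
set y : 'cV[C]_n := delta_mx i 0.
have -> : (A *m z) i 0 = (y^t* *m A *m z) 0 0.
  by rewrite -mulmxA /y adjmx_delta -rowE [RHS]mxE.
set a := (y^t* *m A *m z) 0 0; set c := qform A y.
have zAy : (z^t* *m A *m y) 0 0 = a^* by rewrite /a qform_adjmx Ah.
have c_ge0 : 0 <= c := Apos y.
have c1_gt0 : 0 < c + 1 by rewrite ltr_wpDl.
set x := (c + 1)^-1.
have x_real : x^* = x by rewrite geC0_conj // invr_ge0 ltW.
have := Apos (z + (- (x * a)) *: y).
have conj_xa : (- (x * a))^* = - (x * a^*) by rewrite rmorphN rmorphM -[in RHS]x_real.
rewrite qform_addZ Az0 zAy -/a -/c conj_xa.
have -> : 0 + - (x * a) * a^* + - (x * a^*) * a + - (x * a^*) * - (x * a) * c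
       = - (a * a^*) * (x ^+ 2 * (c + 2)).
  by rewrite /x; field; exact: lt0r_neq0.
rewrite mulNr oppr_ge0 mulrC pmulr_rle0; last first.
  by rewrite mulr_gt0 ?exprn_gt0 ?invr_gt0 // ltr_wpDl.
by move=> aa_le0; apply/eqP; rewrite -mul_conjC_eq0 eq_le aa_le0 mul_conjC_ge0.
Qed.

Lemma psdmx_diag_eq0 n (A : 'M[C]_n) :
  psdmx A -> (forall i, A i i = 0) -> A = 0.
Proof.
move=> Apsd Aii0; apply/matrixP => i j.
have /psdmx_qform_eq0 : qform A (delta_mx j 0 : 'cV[C]_n) = 0.
  by rewrite qform_delta.
by rewrite -colE => /(_ Apsd) /matrixP /(_ i 0); rewrite !mxE.
Qed.

Lemma psdmx_comb_kernel n (M1 M2 : 'M[C]_n) (t s : C) (z : 'cV[C]_n) :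
  psdmx M1 -> psdmx M2 -> 0 < t -> 0 <= s ->
  qform (t *: M1 + s *: M2) z = 0 -> M1 *m z = 0.
Proof.
move=> M1psd M2psd t_gt0 s_ge0; rewrite qform_comb => /eqP.
rewrite paddr_eq0 ?mulr_ge0 ?(ltW t_gt0) ?M1psd.2 ?M2psd.2 //.
by case/andP; rewrite mulf_eq0 (gt_eqF t_gt0) => /eqP /(psdmx_qform_eq0 M1psd).
Qed.

End PositiveSemidefinite.

Section RankOneFace.
Variable C : numClosedFieldType.

Lemma mxrank_le1_factor p n (X : 'M[C]_(p, n)) :
  (\rank X <= 1)%N -> exists (D : 'cV[C]_p) (B : 'rV[C]_n), X = D *m B.
Proof.
rewrite leq_eqVlt ltnS leqn0 mxrank_eq0 => /orP[/eqP rkX1 | /eqP->]; last first.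
  by exists 0, 0; rewrite mul0mx.
have /submxP[D defX] : (X <= row_base X)%MS by rewrite eq_row_base.
by move: D (row_base X) defX; rewrite rkX1 => D B defX; exists D, B.
Qed.

Lemma adjmx_mul_cV_neq0 n (b : 'cV[C]_n) : b != 0 -> (b^t* *m b) 0 0 != 0.
Proof.
apply: contra_neq => bb0; apply: adjmx_mul_eq0.
by rewrite [b^t* *m b]mx11_scalar bb0 raddf0.
Qed.

(* [M] vanishes on the kernel of [B], so it is compressed by the orthogonal
   projection [Pi] onto the line spanned by [B^*]. *)
Lemma psdmx_kernel_rank1 n (M : 'M[C]_n) (B : 'rV[C]_n) :
  psdmx M -> B != 0 -> (forall z : 'cV_n, B *m z = 0 -> M *m z = 0) ->
  exists c, M = c *: (B^t* *m B).
Proof.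
move=> [Mh _] Bn0 kerM.
set nB := (B *m B^t*) 0 0.
have nB_neq0 : nB != 0.
  by rewrite /nB -[B in B *m _]trmxCK adjmx_mul_cV_neq0 // map_mx_eq0 trmx_eq0.
have nB_ge0 : 0 <= nB.
  by rewrite /nB mxE sumr_ge0 // => j _; rewrite !mxE mul_conjC_ge0.
set Pi := nB^-1 *: (B^t* *m B).
have BPi : B *m Pi = B.
  rewrite /Pi -scalemxAr mulmxA [B *m B^t*]mx11_scalar mul_scalar_mx.
  by rewrite scalerA mulVf // scale1r.
have MPi : M *m Pi = M.
  apply/eqP; rewrite -subr_eq0 -{2}[M]mulmx1 -mulmxBr; apply/eqP.
  apply: matrix_eq0_cV => w; rewrite -mulmxA; apply: kerM.
  by rewrite mulmxA mulmxBr BPi mulmx1 subrr mul0mx.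
have Pih : Pi^t* = Pi.
  by rewrite adjmxZ adjmxM trmxCK geC0_conj // invr_ge0.
have PiM : Pi *m M = M by rewrite -Pih -Mh -adjmxM MPi.
exists (nB^-1 * nB^-1 * (B *m M *m B^t*) 0 0).
rewrite -[in LHS]PiM -[in LHS]MPi /Pi -scalemxAl -!scalemxAr scalerA !mulmxA.
rewrite -(mulmxA _ B M) -(mulmxA _ (B *m M)) [in LHS](mx11_scalar (B *m M *m B^t*)).
by rewrite mul_mx_scalar -scalemxAl scalerA.
Qed.

Lemma psdmx_rank1_face p n (X : 'M[C]_(p, n)) (M1 M2 : 'M[C]_n) (t s : C) :
  (\rank X <= 1)%N -> psdmx M1 -> psdmx M2 -> 0 < t -> 0 <= s ->
  X^t* *m X = t *: M1 + s *: M2 -> exists c, M1 = c *: (X^t* *m X).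
Proof.
move=> rkX M1psd M2psd t_gt0 s_ge0 XX.
have kerM1 (z : 'cV_n) : X *m z = 0 -> M1 *m z = 0.
  move=> Xz0; apply: (psdmx_comb_kernel M1psd M2psd t_gt0 s_ge0).
  by rewrite -XX mulmxA -mulmxA -adjmxM Xz0 mulmx0 mxE.
have [X0|Xn0] := eqVneq X 0.
  exists 0; rewrite scale0r; apply: matrix_eq0_cV => z.
  by apply: kerM1; rewrite X0 mul0mx.
have [D [B defX]] := mxrank_le1_factor rkX.
have Bn0 : B != 0 by apply: contra_neq Xn0 => B0; rewrite defX B0 mulmx0.
have Dn0 : D != 0 by apply: contra_neq Xn0 => D0; rewrite defX D0 mul0mx.
have [c ->] : exists c, M1 = c *: (B^t* *m B).
  apply: psdmx_kernel_rank1 => // z Bz0.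
  by apply: kerM1; rewrite defX -mulmxA Bz0 mulmx0.
have XXk : X^t* *m X = (D^t* *m D) 0 0 *: (B^t* *m B).
  rewrite defX adjmxM -mulmxA (mulmxA (D^t*)) [in LHS](mx11_scalar (D^t* *m D)).
  by rewrite mul_scalar_mx -scalemxAr.
exists (c / (D^t* *m D) 0 0).
by rewrite XXk scalerA divfK // adjmx_mul_cV_neq0.
Qed.

End RankOneFace.

Section BlockDiagonal.
Variables (C : numClosedFieldType) (r : nat) (p : 'I_r -> nat).
Local Notation N := (\sum_(i < r) p i)%N.

Lemma mul_mxdiag (A B : forall i, 'M[C]_(p i)) :
  \mxdiag_i A i *m \mxdiag_i B i = \mxdiag_i (A i *m B i).
Proof.
rewrite {2}/mxdiag mul_mxdiag_mxblock /mxdiag; apply: eq_mxblock => i j.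
by case: eqP => [->|_]; rewrite ?conform_mx_id ?mulmx0.
Qed.

Lemma mxdiag_scale c (B : forall i, 'M[C]_(p i)) :
  \mxdiag_i (c *: B i) = c *: \mxdiag_i B i.
Proof.
rewrite -mul_scalar_mx -(mxdiagZ (p_ := p)) mul_mxdiag.
by apply: eq_mxdiag => i; rewrite mul_scalar_mx.
Qed.

Lemma adjmx_mxdiag (B : forall i, 'M[C]_(p i)) :
  (\mxdiag_i B i)^t* = \mxdiag_i (B i)^t*.
Proof.
rewrite tr_mxdiag; apply/mxblockP => i j.
have -> : submxblock (map_mx Num.conj (\mxdiag_i (B i)^T)) i j
          = map_mx Num.conj (submxblock (\mxdiag_i (B i)^T) i j).
  by apply/matrixP => a b; rewrite !mxE.
rewrite /mxdiag !mxblockK; case: eqP => [eq_ij|_]; last by rewrite map_mx0.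
by subst j; rewrite !conform_mx_id.
Qed.

Lemma psdmx_submxblock (A : 'M[C]_N) k : psdmx A -> psdmx (submxblock A k k).
Proof.
pose S := submxrow (1%:M : 'M[C]_N) k.
have -> : submxblock A k k = S^t* *m A *m S.
  have -> : S^t* = submxcol (1%:M : 'M[C]_N) k.
    by apply/matrixP => i j; rewrite !mxE conjC_nat eq_sym.
  rewrite /S /submxrow /submxcol mulmx_colsub mulmx1 mul_rowsub_mx mul1mx.
  by apply/matrixP => i j; rewrite !mxE.
exact: psdmx_conj.
Qed.

End BlockDiagonal.

Section Tensor.
Variable C : numClosedFieldType.

Lemma tensmxDr m n p q (A : 'M[C]_(m, n)) (B B' : 'M[C]_(p, q)) :
  A *t (B + B') = A *t B + A *t B'.
Proof. by apply/matrixP => i j; rewrite !mxE mulrDr. Qed.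

Lemma tensmxZr m n p q (A : 'M[C]_(m, n)) c (B : 'M[C]_(p, q)) :
  A *t (c *: B) = c *: (A *t B).
Proof. by apply/matrixP => i j; rewrite !mxE mulrCA. Qed.

Lemma tensmx11E (A B : 'M[C]_1) : (A *t B) 0 0 = A 0 0 * B 0 0.
Proof. by rewrite mxE !ord1. Qed.

Lemma qform_tens p q (A : 'M[C]_p) (B : 'M[C]_q) (x : 'cV[C]_p) (y : 'cV[C]_q) :
  qform (A *t B) (x *t y) = qform A x * qform B y.
Proof. by rewrite adjmx_tens !tensmx_mul tensmx11E. Qed.

Lemma psdmx_tens1 q n (M : 'M[C]_n) :
  (0 < q)%N -> psdmx ((1%:M : 'M[C]_q) *t M) -> psdmx M.
Proof.
move=> q_gt0 [Th Tpos]; set i0 := Ordinal q_gt0.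
split.
  apply/matrixP => a b.
  move/matrixP: Th => /(_ (mxtens_index (i0, a)) (mxtens_index (i0, b))).
  by rewrite adjmx_tens adjmx1 !tensmxE [1%:M i0 i0]mxE eqxx !mul1r.
move=> v; have := Tpos ((delta_mx i0 0 : 'cV_q) *t v).
by rewrite qform_tens qform_delta mxE eqxx mul1r.
Qed.

End Tensor.

Section Blockop.
Variables (C : numClosedFieldType) (r : nat) (d m : 'I_r -> nat) (dK dH : nat).
Variable W : 'M[C]_(\sum_(k < r) (d k * m k), dK * dH).
Implicit Types M X : forall k, 'M[C]_(m k).

Lemma eq_blockop M M' : (forall k, M k = M' k) -> blockop W M = blockop W M'.
Proof. by move=> eqM; rewrite /blockop (eq_mxdiag (fun k => congr1 _ (eqM k))). Qed.

Lemma blockopD M M' :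
  blockop W M + blockop W M' = blockop W (fun k => M k + M' k).
Proof.
rewrite /blockop -mulmxDl -mulmxDr -mxdiagD.
by congr (_ *m _ *m _); apply: eq_mxdiag => k; rewrite tensmxDr.
Qed.

Lemma blockopZ c M : c *: blockop W M = blockop W (fun k => c *: M k).
Proof.
rewrite /blockop scalemxAl scalemxAr -mxdiag_scale.
by congr (_ *m _ *m _); apply: eq_mxdiag => k; rewrite tensmxZr.
Qed.

Hypothesis W_isometry : W *m W^t* = 1%:M.

Lemma mxdiag_blockop M : W *m blockop W M *m W^t* = \mxdiag_k (1%:M *t M k).
Proof. by rewrite /blockop !mulmxA W_isometry mul1mx -mulmxA W_isometry mulmx1. Qed.

Lemma blockop_adjmx_mul X :
  (blockop W X)^t* *m blockop W X = blockop W (fun k => (X k)^t* *m X k).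
Proof.
rewrite /blockop !adjmxM trmxCK adjmx_mxdiag !mulmxA -(mulmxA _ W) W_isometry.
rewrite mulmx1 -[in LHS](mulmxA (W^t*)) mul_mxdiag.
congr (_ *m _ *m _); apply: eq_mxdiag => k.
by rewrite adjmx_tens adjmx1 tensmx_mul mulmx1.
Qed.

Hypothesis d_gt0 : forall k, (0 < d k)%N.

Lemma blockop_inj M M' : blockop W M = blockop W M' -> forall k, M k = M' k.
Proof.
move=> + k => /(congr1 (fun R => W *m R *m W^t*)); rewrite !mxdiag_blockop.
move=> /(congr1 (fun D => submxblock D k k)); rewrite !submxblock_diag.
move=> /matrixP eqT; apply/matrixP => a b; set i0 := Ordinal (d_gt0 k).
have := eqT (mxtens_index (i0, a)) (mxtens_index (i0, b)).
by rewrite !tensmxE [1%:M i0 i0]mxE eqxx !mul1r.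
Qed.

Lemma psdmx_blockop M : psdmx (blockop W M) -> forall k, psdmx (M k).
Proof.
move=> + k => /(psdmx_conj (W^t*)); rewrite trmxCK mxdiag_blockop.
by move=> /(psdmx_submxblock k); rewrite submxblock_diag; apply: psdmx_tens1.
Qed.

Lemma blockop_rank1_face X M1 M2 k0 t s :
  (\rank (X k0) <= 1)%N -> (forall k, k != k0 -> X k = 0) ->
  psdmx (blockop W M1) -> psdmx (blockop W M2) -> 0 < t -> 0 <= s ->
  blockop W (fun k => (X k)^t* *m X k) = t *: blockop W M1 + s *: blockop W M2 ->
  exists c, blockop W M1 = c *: blockop W (fun k => (X k)^t* *m X k).
Proof.
move=> rkX0 Xk0 M1psd M2psd t_gt0 s_ge0.
rewrite !blockopZ blockopD => /blockop_inj decompX.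
have face k : exists c, M1 k = c *: ((X k)^t* *m X k).
  have rkX : (\rank (X k) <= 1)%N.
    by have [->//|/Xk0->] := eqVneq k k0; rewrite mxrank0.
  exact: (psdmx_rank1_face rkX (psdmx_blockop M1psd k) (psdmx_blockop M2psd k)
                           t_gt0 s_ge0 (decompX k)).
have [c defM1] := face k0; exists c; rewrite blockopZ; apply: eq_blockop => k.
have [->//|/Xk0 Xk_0] := eqVneq k k0.
by have [c' ->] := face k; rewrite Xk_0 mulmx0 !scaler0.
Qed.

End Blockop.

Section PartialTrace.
Variables (C : numClosedFieldType) (dK dH : nat).
Implicit Type R : 'M[C]_(dK * dH).

Lemma ptraceKZ c R : ptraceK (c *: R) = c *: ptraceK R.
Proof.
apply/matrixP => i j; rewrite !mxE mulr_sumr.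
by apply: eq_bigr => a _; rewrite mxE.
Qed.

Lemma psdmx_ptraceK_eq0 R : psdmx R -> ptraceK R = 0 -> R = 0.
Proof.
move=> Rpsd /matrixP trR0; apply: psdmx_diag_eq0 => // ai.
case: (mxtens_indexP ai) => a i.
have := trR0 i i; rewrite !mxE => /psumr_eq0P; apply=> // b _.
exact: psdmx_diag_ge0.
Qed.

Lemma ptraceK_scale_eq1 c R :
  psdmx R -> R != 0 -> ptraceK (c *: R) = ptraceK R -> c = 1.
Proof.
move=> Rpsd Rn0; rewrite ptraceKZ => /eqP; rewrite -subr_eq0 -[X in _ - X]scale1r.
rewrite -scalerBl scaler_eq0 subr_eq0 => /orP[/eqP //|/eqP trR0].
by rewrite (psdmx_ptraceK_eq0 Rpsd trR0) eqxx in Rn0.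
Qed.

End PartialTrace.

Theorem mainTheorem14 (C : numClosedFieldType) (G : mgroupType) (dH dK : nat)
  (U : G -> 'M[C]_dH) (V : G -> 'M[C]_dK)
  (r : nat) (d m : 'I_r -> nat) (rho : forall k : 'I_r, G -> 'M[C]_(d k))
  (W : 'M[C]_(\sum_(k < r) (d k * m k), dK * dH)) (K0 : 'M[C]_dH)
  (Xk : forall k : 'I_r, 'M[C]_(m k)) :
  unitary_rep U -> unitary_rep V ->
  isotypic_decomposition V U rho W ->
  psdmx K0 -> psdmx (1%:M - K0) ->
  (exists k0 : 'I_r, \rank (Xk k0) = 1%N /\ forall k, k != k0 -> Xk k = 0) ->
  CK0 W K0 ((blockop W Xk) ^t* *m blockop W Xk) ->
  extremal (CK0 W K0) ((blockop W Xk) ^t* *m blockop W Xk).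
Proof.
move=> _ _ [[/unitarymxP W_isometry _] irr_rho _ _ _] _ _ [k0 [rkX0 Xk0]].
have d_gt0 k : (0 < d k)%N by case: (irr_rho k).
rewrite blockop_adjmx_mul //; set R := blockop W _ => RinC.
have [_ Rpsd trR] := RinC.
have Rn0 : R != 0.
  apply/eqP => R0; suff X0 : Xk k0 = 0 by move: rkX0; rewrite X0 mxrank0.
  apply: adjmx_mul_eq0; pose P k := (Xk k)^t* *m Xk k.
  have /(blockop_inj W_isometry d_gt0) P_eq0 :
      blockop W P = blockop W (fun k => 0 *: P k).
    by rewrite -blockopZ scale0r.
  by rewrite -/(P k0) P_eq0 ?scale0r.
have face R1 R2 t : CK0 W K0 R1 -> CK0 W K0 R2 -> 0 < t -> 0 <= 1 - t ->
    R = t *: R1 + (1 - t) *: R2 -> R1 = R.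
  move=> [[M1 ->] M1psd trM1] [[M2 ->] M2psd _] t_gt0 t1_ge0 defR.
  have [c defM1] := blockop_rank1_face W_isometry d_gt0 (eq_leq rkX0) Xk0
                      M1psd M2psd t_gt0 t1_ge0 defR.
  have c1 : c = 1 by apply: (ptraceK_scale_eq1 Rpsd Rn0); rewrite -defM1 trM1 trR.
  by rewrite defM1 c1 scale1r.
split=> // R1 R2 t R1inC R2inC /andP[t_gt0 t_lt1] defR.
have t1_ge0 : 0 <= 1 - t by rewrite subr_ge0 ltW.
split; first exact: (face _ _ _ R1inC R2inC t_gt0 t1_ge0 defR).
apply: (face _ _ (1 - t) R2inC R1inC); rewrite ?subr_gt0 ?subKr ?ltW //.
by rewrite addrC.
Qed.
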